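(* Let $n\ge 2$ and let $A\in\Sigma_{n^2}$. Then the number $\xi_n$ of all matrices $B\in\Sigma_{n^2}$ which are disjoint with $A$ does not depend on $A$ and is equal to $$\xi_n=\sum_{\overline{A}\in\overline{\mathfrak{B}}_n,\ \varepsilon(\overline{A})\ge 2}(-1)^{\varepsilon(\overline{A})}\,|\overline{A}|\prod_{i=0}^{n-2}\left[(n-i)!\right]^{\psi_i(\overline{A})}.$$
   Context: $\Sigma_{n^2}$ is the set of $n^2\times n^2$ binary matrices which, when partitioned into $n^2$ non-intersecting consecutive $n\times n$ blocks, contain exactly one $1$ in each row, each column and each block (S-permutation matrices). Two binary matrices $(a_{ij}),(b_{ij})$ of equal size are disjoint if there are no $i,j$ with $a_{ij}=b_{ij}=1$. $\mathfrak{B}_n$ is the set of $n\times n$ binary matrices. For $A\in\mathfrak{B}_n$, $r_k(A)$ (resp. $c_k(A)$) is the number of rows (resp. columns) of $A$ with exactly $k$ ones, $\psi_k(A)=r_k(A)+c_k(A)$, and $\varepsilon(A)$ is the total number of ones of $A$. $A\sim B$ iff $B$ is obtained from $A$ by permuting rows; $\overline{A}$ denotes the equivalence class of $A$, $|\overline{A}|$ its cardinality, $\overline{\mathfrak{B}}_n=\mathfrak{B}_n/\!\sim$; $\psi_k,\varepsilon$ are defined on classes via any representative. *)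

From HB Require Import structures.
From mathcomp Require Import all_boot all_order all_algebra all_fingroup.
Set Implicit Arguments. Unset Strict Implicit. Unset Printing Implicit Defensive.

(* Binary matrices are 'M[bool]_(m,m); entry true = 1. *)

Definition is_Sperm (n : nat) (A : 'M[bool]_(n * n)) : bool :=
  [&& [forall i, #|[set j | A i j]| == 1],
      [forall j, #|[set i | A i j]| == 1] &
      [forall a : 'I_n, forall b : 'I_n,
         #|[set p : 'I_(n * n) * 'I_(n * n) |
              [&& A p.1 p.2, p.1 %/ n == a & p.2 %/ n == b]]| == 1]].

Definition mx_disjoint (m : nat) (A B : 'M[bool]_m) : bool :=
  [forall i, forall j, ~~ (A i j && B i j)].

Definition r_ (n k : nat) (A : 'M[bool]_n) : nat :=
  #|[set i | #|[set j | A i j]| == k]|.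
Definition c_ (n k : nat) (A : 'M[bool]_n) : nat :=
  #|[set j | #|[set i | A i j]| == k]|.
Definition psi_ (n k : nat) (A : 'M[bool]_n) : nat := r_ k A + c_ k A.
Definition eps (n : nat) (A : 'M[bool]_n) : nat := #|[set p | A p.1 p.2]|.

Definition rowclass (n : nat) (A : 'M[bool]_n) : {set 'M[bool]_n} :=
  [set B | [exists s : 'S_n, B == row_perm s A]].

Definition Bbar_classes (n : nat) : {set {set 'M[bool]_n}} :=
  [set rowclass A | A : 'M[bool]_n].

Definition crep (n : nat) (C : {set 'M[bool]_n}) : 'M[bool]_n :=
  odflt (const_mx false) [pick B in C].

(* An S-permutation matrix is the same thing as a pair of families of
   permutations: for every block row a, a permutation telling which row of
   the band the block (a, b) uses, and for every block column b, one telling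
   which column it uses.  Two S-permutation matrices are disjoint exactly
   when they never use the same cell of a block.  Inclusion-exclusion over
   the set of blocks on which agreement with A is forced, encoded as a binary
   n x n matrix M, produces (-1)^eps(M) times the number of codes agreeing
   with A on M; that number is prod_rows (n - r)! * prod_cols (n - c)!, where
   r and c count the ones of M in a row or column, so it does not depend on
   A, and grouping rows and columns by their number of ones gives the psi
   exponents.  The terms with eps(M) <= 1 cancel, and the summand is
   invariant under row permutations, which produces the factor |class|. *)

From HB Require Import structures.
From mathcomp Require Import all_boot all_order all_algebra all_fingroup.
From mathcomp Require Import zify.
Import GRing.Theory Num.Theory.
Set Implicit Arguments. Unset Strict Implicit. Unset Printing Implicit Defensive.

Local Notation sperm_code n := ({ffun 'I_n -> 'S_n} * {ffun 'I_n -> 'S_n})%type.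

Section BlockIndex.
Variable n : nat.

Lemma blk_subproof (i : 'I_(n * n)) : i %/ n < n.
Proof. by case: n i => [|m] [i /= lt_i]; rewrite ?muln0 // ltn_divLR. Qed.

Lemma ofs_subproof (i : 'I_(n * n)) : i %% n < n.
Proof. by case: n i => [|m] [i /= lt_i]; rewrite ?muln0 // ltn_pmod. Qed.

Lemma bidx_subproof (a x : 'I_n) : a * n + x < n * n.
Proof. case: a x => [a lt_a] [x lt_x] /=; nia. Qed.

Definition blk (i : 'I_(n * n)) : 'I_n := Ordinal (blk_subproof i).
Definition ofs (i : 'I_(n * n)) : 'I_n := Ordinal (ofs_subproof i).
Definition bidx (a x : 'I_n) : 'I_(n * n) := Ordinal (bidx_subproof a x).

Lemma blk_eqE (i : 'I_(n * n)) (a : 'I_n) : (i %/ n == a) = (blk i == a).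
Proof. by []. Qed.

Lemma blk_bidx a x : blk (bidx a x) = a.
Proof.
by apply: val_inj; rewrite /= divnMDl ?divn_small ?addn0 //; case: a => a /=; lia.
Qed.

Lemma ofs_bidx a x : ofs (bidx a x) = x.
Proof. by apply: val_inj; rewrite /= modnMDl modn_small. Qed.

Lemma bidx_blk_ofs i : bidx (blk i) (ofs i) = i.
Proof. by apply: val_inj; rewrite /= -divn_eq. Qed.

Variant bidx_spec (i : 'I_(n * n)) : Prop := BidxSpec a x of i = bidx a x.

Lemma bidxP i : bidx_spec i.
Proof. exact: BidxSpec (esym (bidx_blk_ofs i)). Qed.

Lemma bidx_eq a x b y : (bidx a x == bidx b y) = (a == b) && (x == y).
Proof.
apply/idP/andP => [/eqP eq_ab | [/eqP-> /eqP->] //].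
have := congr1 blk eq_ab; have := congr1 ofs eq_ab.
by rewrite !blk_bidx !ofs_bidx => -> ->.
Qed.

End BlockIndex.

Lemma card1_inj (T : finType) (P : pred T) x y :
  #|[set z | P z]| == 1 -> P x -> P y -> x = y.
Proof.
case/cards1P => z Pz Px Py.
have eq_z w : P w -> w = z by move=> Pw; apply/set1P; rewrite -Pz inE.
by rewrite (eq_z x Px) (eq_z y Py).
Qed.

Section SpermCode.
Variable n : nat.

Definition sperm_mx (c : sperm_code n) : 'M[bool]_(n * n) :=
  \matrix_(i, j) ((c.1 (blk i) (blk j) == ofs i) && (c.2 (blk j) (blk i) == ofs j)).

Lemma sperm_mxE c a x b y :
  sperm_mx c (bidx a x) (bidx b y) = (c.1 a b == x) && (c.2 b a == y).
Proof. by rewrite mxE !blk_bidx !ofs_bidx. Qed.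

Lemma sperm_mx_Sperm c : is_Sperm (sperm_mx c).
Proof.
have eq_permV (s : 'S_n) u v : (s u == v) = (u == (s^-1)%g v).
  by apply/eqP/eqP => [<-|->]; rewrite ?permK ?permKV.
apply/and3P; split.
- apply/forallP => i; case: (bidxP i) => a x ->.
  apply/cards1P; exists (bidx ((c.1 a)^-1%g x) (c.2 ((c.1 a)^-1%g x) a)).
  apply/setP => j; case: (bidxP j) => b y ->.
  by rewrite !inE sperm_mxE bidx_eq eq_permV; case: eqP => [->|] //=; rewrite eq_sym.
- apply/forallP => j; case: (bidxP j) => b y ->.
  apply/cards1P; exists (bidx ((c.2 b)^-1%g y) (c.1 ((c.2 b)^-1%g y) b)).
  apply/setP => i; case: (bidxP i) => a x ->.
  rewrite !inE sperm_mxE bidx_eq andbC eq_permV.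
  by case: eqP => [->|] //=; rewrite eq_sym.
- apply/forallP => a; apply/forallP => b.
  apply/cards1P; exists (bidx a (c.1 a b), bidx b (c.2 b a)).
  apply/setP => -[i j]; case: (bidxP i) => a' x ->; case: (bidxP j) => b' y ->.
  rewrite !inE !blk_eqE /= !blk_bidx sperm_mxE xpair_eqE !bidx_eq.
  case: (a' =P a) => [->|]; case: (b' =P b) => [->|]; rewrite ?andbF ?andbT //=.
  by rewrite [x == _]eq_sym [y == _]eq_sym.
Qed.

Lemma sperm_mx_inj : injective sperm_mx.
Proof.
move=> [s t] [s' t'] eq_st.
have agree a b : (s' a b == s a b) && (t' b a == t b a).
  have := congr1 (fun M : 'M_(n * n) => M (bidx a (s a b)) (bidx b (t b a))) eq_st.
  by rewrite /= !sperm_mxE /= !eqxx => <-.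
congr pair; apply/ffunP => a; apply/permP => b.
- by have /andP[/eqP-> _] := agree a b.
- by have /andP[_ /eqP->] := agree b a.
Qed.

Section Decode.
Variable B : 'M[bool]_(n * n).
Hypothesis SpermB : is_Sperm B.

Lemma Sperm_row_uniq i j j' : B i j -> B i j' -> j = j'.
Proof.
case/and3P: SpermB => /forallP/(_ i) row1 _ _.
exact: (@card1_inj _ (B i)).
Qed.

Lemma Sperm_col_uniq j i i' : B i j -> B i' j -> i = i'.
Proof.
case/and3P: SpermB => _ /forallP/(_ j) col1 _.
exact: (@card1_inj _ (B^~ j)).
Qed.

Definition in_block a b (p : 'I_(n * n) * 'I_(n * n)) :=
  [&& B p.1 p.2, blk p.1 == a & blk p.2 == b].

Lemma Sperm_block_uniq a b p q : in_block a b p -> in_block a b q -> p = q.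
Proof. by case/and3P: SpermB => _ _ /forallP/(_ a)/forallP/(_ b); exact: card1_inj. Qed.

Lemma Sperm_block_exists a b : exists p, in_block a b p.
Proof.
case/and3P: SpermB => _ _ /forallP/(_ a)/forallP/(_ b)/cards1P[p block_p].
by exists p; have := set11 p; rewrite -block_p inE.
Qed.

Definition block_entry a b : 'I_(n * n) * 'I_(n * n) :=
  odflt (bidx a a, bidx b b) [pick p | in_block a b p].

Definition row_ofs a b := ofs (block_entry a b).1.
Definition col_ofs b a := ofs (block_entry a b).2.

Lemma block_entryP a b : in_block a b (block_entry a b).
Proof.
rewrite /block_entry; case: pickP => [//|no_entry].
by have [p] := Sperm_block_exists a b; rewrite no_entry.
Qed.

Lemma block_entryE a b :
  block_entry a b = (bidx a (row_ofs a b), bidx b (col_ofs b a)).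
Proof.
rewrite /row_ofs /col_ofs; have := block_entryP a b.
by case: (block_entry a b) => i j /and3P[_ /eqP<- /eqP<-]; rewrite !bidx_blk_ofs.
Qed.

Lemma Sperm_block_entry a b : B (bidx a (row_ofs a b)) (bidx b (col_ofs b a)).
Proof. by have /and3P[] := block_entryP a b; rewrite block_entryE. Qed.

Lemma Sperm_block_entry_uniq a x b y :
  B (bidx a x) (bidx b y) -> x = row_ofs a b /\ y = col_ofs b a.
Proof.
move=> Bxy; have in_ab : in_block a b (bidx a x, bidx b y).
  by rewrite /in_block /= !blk_bidx !eqxx Bxy.
have := Sperm_block_uniq in_ab (block_entryP a b).
rewrite block_entryE => /eqP; rewrite xpair_eqE !bidx_eq.
by case/andP => /andP[_ /eqP->] /andP[_ /eqP->].
Qed.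

Lemma row_ofs_inj a : injective (row_ofs a).
Proof.
move=> b b' eq_ofs; have Bb := Sperm_block_entry a b.
rewrite eq_ofs in Bb; have := Sperm_row_uniq Bb (Sperm_block_entry a b').
by move/eqP; rewrite bidx_eq => /andP[/eqP].
Qed.

Lemma col_ofs_inj b : injective (col_ofs b).
Proof.
move=> a a' eq_ofs; have Ba := Sperm_block_entry a b.
rewrite eq_ofs in Ba; have := Sperm_col_uniq Ba (Sperm_block_entry a' b).
by move/eqP; rewrite bidx_eq => /andP[/eqP].
Qed.

Lemma Sperm_sperm_mx : exists c, B = sperm_mx c.
Proof.
exists ([ffun a => perm (@row_ofs_inj a)], [ffun b => perm (@col_ofs_inj b)]).
apply/matrixP => i j; case: (bidxP i) => a x ->; case: (bidxP j) => b y ->.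
rewrite sperm_mxE !ffunE !permE; apply/idP/andP => [/Sperm_block_entry_uniq[-> ->] | ].
  by rewrite !eqxx.
by case=> /eqP<- /eqP<-; exact: Sperm_block_entry.
Qed.

End Decode.
End SpermCode.

Lemma card_perm_agree (T : finType) (D : {set T}) (pi : {perm T}) :
  #|[set s : {perm T} | [forall x in D, s x == pi x]]| = #|~: D|`!.
Proof.
rewrite -card_perm -[RHS]cardsE -[RHS](card_preimset _ (mulIg pi^-1)%g); apply: eq_card => s.
rewrite !inE; apply/forallP/subsetP => [agree x | fixD x].
  rewrite !inE permM; apply: contra => Dx.
  by have /implyP/(_ Dx)/eqP-> := agree x; rewrite permK.
apply/implyP => Dx; apply/eqP.
have: x \notin [pred y | (s * pi^-1)%g y != y].
  by apply: contraL Dx => /fixD; rewrite inE.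
by rewrite !inE permM negbK => /eqP fix_x; rewrite -{2}fix_x permKV.
Qed.

Lemma card_family_set (I J : finType) (G : I -> {set J}) :
  #|[set g : {ffun I -> J} | [forall i, g i \in G i]]| = (\prod_i #|G i|)%N.
Proof.
have card_sum (T : finType) (A : {set T}) : #|A| = (\sum_t (t \in A : nat))%N.
  by rewrite -sum1_card big_mkcond /=; apply: eq_bigr => t _; case: (t \in A).
under [RHS]eq_bigr => i _ do rewrite card_sum.
rewrite bigA_distr_bigA /= card_sum; apply: eq_bigr => g _; rewrite inE; symmetry.
case: (boolP [forall i, _]) => [/forallP all_in | /forallPn[i /negbTE out]].
  by apply: big1 => i _; rewrite all_in.
by rewrite (bigD1 i) //= out mul0n.
Qed.

Section Agreement.
Variable n : nat.

Definition code_agree (c d : sperm_code n) (p : 'I_n * 'I_n) :=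
  (c.1 p.1 p.2 == d.1 p.1 p.2) && (c.2 p.2 p.1 == d.2 p.2 p.1).

Lemma mx_disjoint_sperm_mx c d :
  mx_disjoint (sperm_mx c) (sperm_mx d) = [forall p, ~~ code_agree c d p].
Proof.
apply/forallP/forallP => [disj [a b] | no_agree i].
  have /forallP/(_ (bidx b (c.2 b a))) := disj (bidx a (c.1 a b)).
  by rewrite !sperm_mxE !eqxx /= /code_agree /= eq_sym [c.2 _ _ == _]eq_sym.
apply/forallP => j; case: (bidxP i) => a x ->; case: (bidxP j) => b y ->.
rewrite !sperm_mxE; apply: contra (no_agree (a, b)); rewrite /code_agree /=.
by case/and3P => /andP[/eqP-> /eqP->] /eqP-> /eqP->; rewrite !eqxx.
Qed.

Lemma card_Sperm_disjoint c :
  #|[set B | is_Sperm B && mx_disjoint (sperm_mx c) B]| =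
  #|[set d | [forall p, ~~ code_agree c d p]]|.
Proof.
rewrite -[RHS](card_imset _ (@sperm_mx_inj n)); apply: eq_card => B.
rewrite inE; apply/andP/imsetP => [[/Sperm_sperm_mx[d ->] disj] | [d + ->]].
  by exists d; rewrite // inE -mx_disjoint_sperm_mx.
by rewrite inE -mx_disjoint_sperm_mx; split; first exact: sperm_mx_Sperm.
Qed.

Definition mx_supp (M : 'M[bool]_n) : {set 'I_n * 'I_n} := [set p | M p.1 p.2].

Lemma mx_supp_bij : bijective mx_supp.
Proof.
exists (fun S : {set 'I_n * 'I_n} => (\matrix_(i, j) ((i, j) \in S) : 'M[bool]_n)%R).
  by move=> M; apply/matrixP => i j; rewrite mxE inE.
by move=> S; apply/setP => -[i j]; rewrite inE mxE.
Qed.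

Lemma card_agree_on_supp c (M : 'M[bool]_n) :
  #|[set d | [forall p in mx_supp M, code_agree c d p]]| =
  (\prod_a (n - #|[set b | M a b]|)`! * \prod_b (n - #|[set a | M a b]|)`!)%N.
Proof.
(* Agreement on block (a, b) fixes d.1 a at b and d.2 b at a, so the
   constraints split into one per block row and one per block column. *)
have cardC_ord (D : {set 'I_n}) : #|~: D| = (n - #|D|)%N.
  by have := cardsC D; rewrite card_ord; lia.
pose rowG a := [set s : 'S_n | [forall b in [set b | M a b], s b == c.1 a b]].
pose colG b := [set t : 'S_n | [forall a in [set a | M a b], t a == c.2 b a]].
transitivity #|setX [set s : {ffun 'I_n -> 'S_n} | [forall a, s a \in rowG a]]
                    [set t : {ffun 'I_n -> 'S_n} | [forall b, t b \in colG b]]|.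
  apply: eq_card => -[s t]; rewrite !inE /=.
  apply/forallP/andP => [agree | [/forallP rows /forallP cols] [a b]].
    split; apply/forallP => e; rewrite inE; apply/forallP => f; rewrite inE;
      apply/implyP => Mef.
      have /implyP := agree (e, f); rewrite inE => /(_ Mef) /andP[/eqP-> _].
      by rewrite eqxx.
    have /implyP := agree (f, e); rewrite inE => /(_ Mef) /andP[_ /eqP->].
    by rewrite eqxx.
  apply/implyP; rewrite inE /= => Mab; rewrite /code_agree /=.
  have := rows a; have := cols b; rewrite !inE => /forallP/(_ a) + /forallP/(_ b).
  by rewrite !inE Mab /= => /eqP-> /eqP->; rewrite !eqxx.
rewrite cardsX !card_family_set; congr (_ * _)%N; apply: eq_bigr => a _.
  by rewrite card_perm_agree cardC_ord.
by rewrite card_perm_agree cardC_ord.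
Qed.

End Agreement.

Local Open Scope ring_scope.

Lemma inclusion_exclusion (T K : finType) (E : T -> K -> bool) :
  #|[set t | [forall k, ~~ E t k]]|%:Z =
  \sum_(S : {set K}) (-1) ^+ #|S| * #|[set t | [forall k in S, E t k]]|%:Z.
Proof.
have card_setZ (P : pred T) : #|[set t | P t]|%:Z = \sum_t (P t)%:Z.
  rewrite -sum1_card -natz natr_sum big_mkcond /=.
  by apply: eq_bigr => t _; rewrite inE; case: (P t).
have prod_boolZ (P : pred K) (b : K -> bool) :
    \prod_(k | P k) (b k)%:Z = [forall k, P k ==> b k]%:Z.
  case: (boolP [forall k, _]) => [/forallP all_b | /forallPn[k]].
    by apply: big1 => k Pk; have /implyP/(_ Pk)-> := all_b k.
  by rewrite negb_imply => /andP[Pk /negbTE not_b]; rewrite (bigD1 k) //= not_b mul0r.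
transitivity (\sum_t \prod_k (- (E t k)%:Z + 1)).
  rewrite card_setZ; apply: eq_bigr => t _; rewrite -(prod_boolZ xpredT) /=.
  by apply: eq_bigr => k _; case: (E t k).
under eq_bigr => t _ do rewrite bigA_distr.
rewrite exchange_big /=; apply: eq_bigr => S _.
rewrite card_setZ mulr_sumr; apply: eq_bigr => t _.
by rewrite -big_mkcond prodrN prod_boolZ.
Qed.

Lemma prod_by_value (I : finType) (f : I -> nat) (h : nat -> nat) m :
  (forall i, f i <= m)%N ->
  (\prod_i h (f i) = \prod_(0 <= k < m.+1) h k ^ #|[set i | f i == k]|)%N.
Proof.
move=> f_le_m; rewrite big_mkord (partition_big (fun i => inord (f i) : 'I_m.+1) xpredT) //=.
apply: eq_bigr => k _; rewrite -prod_nat_const; apply: eq_big => i.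
  by rewrite inE -val_eqE /= inordK // ltnS.
by move=> /eqP <-; rewrite inordK // ltnS.
Qed.

Lemma prod_fact_psi n (M : 'M[bool]_n) : (0 < n)%N ->
  (\prod_(0 <= k < n.-1) (n - k)`! ^ psi_ k M =
   \prod_a (n - #|[set b | M a b]|)`! * \prod_b (n - #|[set a | M a b]|)`!)%N.
Proof.
move=> n_gt0.
have trim (e : nat -> nat) :
    (\prod_(0 <= k < n.+1) (n - k)`! ^ e k = \prod_(0 <= k < n.-1) (n - k)`! ^ e k)%N.
  rewrite [LHS](@big_cat_nat _ _ _ n.-1) //=; last by lia.
  rewrite [X in (_ * X)%N = _]big1_seq ?muln1 // => k /andP[_].
  rewrite mem_index_iota => /andP[le_k _].
  have: (n - k <= 1)%N by lia.
  by case: (n - k)%N => [|[|]] // _; rewrite exp1n.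
have card_le_n (A : {set 'I_n}) : (#|A| <= n)%N by rewrite -[leqRHS]card_ord max_card.
rewrite /psi_; under eq_bigr => k _ do rewrite expnD.
by rewrite big_split /= -!trim -!prod_by_value => [|a|a]; rewrite ?card_le_n.
Qed.

Section RowClasses.
Variable n : nat.
Implicit Types (M : 'M[bool]_n) (s : 'S_n).

Definition xi_term M : int :=
  (-1) ^+ eps M * (\prod_(0 <= k < n.-1) (n - k)`! ^ psi_ k M)%N%:Z.

Lemma eps_row_perm s M : eps (row_perm s M) = eps M.
Proof.
have perm1_inj : injective (fun p : 'I_n * 'I_n => (s p.1, p.2)).
  by move=> [a b] [c d] [/perm_inj-> ->].
rewrite /eps -[RHS](card_preimset _ perm1_inj).
by apply: eq_card => p; rewrite !inE mxE.
Qed.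

Lemma card_row_perm_col s M b : #|[set a | row_perm s M a b]| = #|[set a | M a b]|.
Proof.
by rewrite -[RHS](card_preimset _ (@perm_inj _ s)); apply: eq_card => a; rewrite !inE mxE.
Qed.

Lemma r_row_perm s M k : r_ k (row_perm s M) = r_ k M.
Proof.
rewrite /r_ -[RHS](card_preimset _ (@perm_inj _ s)); apply: eq_card => a.
by rewrite !inE; congr (_ == k); apply: eq_card => b; rewrite !inE mxE.
Qed.

Lemma c_row_perm s M k : c_ k (row_perm s M) = c_ k M.
Proof. by apply: eq_card => b; rewrite !inE card_row_perm_col. Qed.

Lemma xi_term_row_perm s M : xi_term (row_perm s M) = xi_term M.
Proof.
rewrite /xi_term eps_row_perm; congr (_ * (_ : nat)%:Z); apply: eq_bigr => k _.
by rewrite /psi_ r_row_perm c_row_perm.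
Qed.

Lemma mem_rowclass M' M : (M' \in rowclass M) = [exists s, M' == row_perm s M].
Proof. by rewrite inE. Qed.

Lemma rowclass_refl M : M \in rowclass M.
Proof. by rewrite mem_rowclass; apply/existsP; exists 1%g; rewrite row_perm1. Qed.

Lemma rowclass_eq M' M : M' \in rowclass M -> rowclass M' = rowclass M.
Proof.
rewrite mem_rowclass => /existsP[s /eqP->]; apply/setP => B; rewrite !mem_rowclass.
apply/existsP/existsP => [[t /eqP->] | [u /eqP->]].
  by exists (t * s)%g; rewrite row_permM.
by exists (u * s^-1)%g; rewrite -row_permM mulgKV.
Qed.

Lemma crep_rowclass M : crep (rowclass M) \in rowclass M.
Proof.
by rewrite /crep; case: pickP => [//|none]; have := none M; rewrite rowclass_refl.
Qed.

Lemma eq_on_rowclass (T : Type) (f : 'M[bool]_n -> T) M' M :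
  (forall s M, f (row_perm s M) = f M) -> M' \in rowclass M -> f M' = f M.
Proof. by move=> f_inv; rewrite mem_rowclass => /existsP[s /eqP->]. Qed.

Lemma sum_rowclasses (P : pred 'M[bool]_n) (F : 'M[bool]_n -> int) :
    (forall s M, P (row_perm s M) = P M) -> (forall s M, F (row_perm s M) = F M) ->
  \sum_(C in Bbar_classes n | P (crep C)) #|C|%:Z * F (crep C) = \sum_(M | P M) F M.
Proof.
move=> P_inv F_inv.
rewrite [RHS](partition_big _ (mem (Bbar_classes n)) (fun M _ => imset_f _ _)) //=.
rewrite big_mkcondr; apply: eq_bigr => _ /imsetP[M0 _ ->].
have rep_M0 := crep_rowclass M0.
rewrite (eq_on_rowclass P_inv rep_M0) (eq_on_rowclass F_inv rep_M0).
rewrite (eq_bigl (fun M => P M0 && (M \in rowclass M0))) => [|M]; last first.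
  case: (boolP (M \in rowclass M0)) => [inM | notinM].
    by rewrite (rowclass_eq inM) eqxx (eq_on_rowclass P_inv inM) andbT.
  by rewrite andbF; apply/negbTE; apply: contra notinM => /andP[_ /eqP<-]; exact: rowclass_refl.
rewrite (eq_bigr (fun=> F M0)) => [|M /andP[_ inM]]; last exact: eq_on_rowclass F_inv inM.
case: (P M0); last by rewrite big_pred0.
by rewrite sumr_const -mulr_natl natz.
Qed.

End RowClasses.

Section SmallSupport.
Variable n : nat.
Hypothesis n_gt0 : (0 < n)%N.
Implicit Types (M : 'M[bool]_n) (p : 'I_n * 'I_n).

Lemma xi_termE M :
  xi_term M = (-1) ^+ eps M *
    (\prod_a (n - #|[set b | M a b]|)`! * \prod_b (n - #|[set a | M a b]|)`!)%N%:Z.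
Proof. by rewrite /xi_term prod_fact_psi. Qed.

Definition mx_delta p : 'M[bool]_n := \matrix_(i, j) ((i, j) == p).

Lemma mx_delta_inj : injective mx_delta.
Proof.
move=> p q /matrixP/(_ p.1)/(_ p.2); rewrite !mxE -surjective_pairing eqxx.
by move/esym/eqP.
Qed.

Lemma eps_eq0 M : (eps M == 0)%N = (M == const_mx false).
Proof.
rewrite cards_eq0; apply/eqP/eqP => [no_one | ->].
  apply/matrixP => i j; rewrite mxE; apply/negbTE.
  by move/setP: no_one => /(_ (i, j)); rewrite !inE => ->.
by apply/setP => p; rewrite !inE mxE.
Qed.

Lemma eps_eq1 M : (eps M == 1)%N = (M \in mx_delta @: setT).
Proof.
apply/cards1P/imsetP => [[p one_p] | [p _ ->]].
  exists p => //; apply/matrixP => i j; rewrite mxE.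
  by move/setP: one_p => /(_ (i, j)); rewrite !inE.
by exists p; apply/setP => q; rewrite !inE mxE -surjective_pairing.
Qed.

Lemma prod_fact_delta (c : 'I_n) :
  (\prod_a (n - (a == c))`! = (n.-1)`! * n`! ^ n.-1)%N.
Proof.
rewrite (bigD1 c) //= eqxx subn1; congr (_ * _)%N.
rewrite (eq_bigr (fun=> n`!)) => [|a /negbTE->]; last by rewrite subn0.
by rewrite prod_nat_const cardC1 card_ord.
Qed.

Lemma xi_term_delta p : xi_term (mx_delta p) = - ((n.-1)`! * n`! ^ n.-1)%N%:Z ^+ 2.
Proof.
have eps_delta : eps (mx_delta p) = 1%N by apply/eqP; rewrite eps_eq1 imset_f.
case: p eps_delta => r c eps_delta.
have row_delta a : #|[set b | mx_delta (r, c) a b]| = (a == r).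
  case: eqP => [-> | ne_a]; last first.
    by apply/eqP; rewrite cards_eq0; apply/eqP/setP => b; rewrite !inE mxE xpair_eqE; case: eqP.
  by apply/eqP/cards1P; exists c; apply/setP => b; rewrite !inE mxE xpair_eqE eqxx.
have col_delta b : #|[set a | mx_delta (r, c) a b]| = (b == c).
  case: eqP => [-> | ne_b]; last first.
    by apply/eqP; rewrite cards_eq0; apply/eqP/setP => a; rewrite !inE mxE xpair_eqE andbC; case: eqP.
  by apply/eqP/cards1P; exists r; apply/setP => a; rewrite !inE mxE xpair_eqE eqxx andbT.
rewrite xi_termE eps_delta expr1 mulN1r.
under eq_bigr => a _ do rewrite row_delta.
under [X in (_ * X)%N]eq_bigr => b _ do rewrite col_delta.
by rewrite !prod_fact_delta PoszM expr2.
Qed.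

Lemma xi_term_zero :
  xi_term (const_mx false : 'M[bool]_n) = (n * ((n.-1)`! * n`! ^ n.-1))%N%:Z ^+ 2.
Proof.
have eps0 : eps (const_mx false : 'M[bool]_n) = 0%N by apply/eqP; rewrite eps_eq0.
have no_one (P : 'I_n -> 'I_n -> bool) : (forall a b, ~~ P a b) ->
    (\prod_a (n - #|[set b | P a b]|)`! = n`! ^ n)%N.
  move=> notP; rewrite -[n in (_ ^ n)%N]card_ord -prod_nat_const.
  apply: eq_bigr => a _; rewrite (@eq_card0 _ [set b | P a b]) ?subn0 // => b.
  by rewrite !inE (negbTE (notP a b)).
have fact_pow : (n`! ^ n = n * ((n.-1)`! * n`! ^ n.-1))%N.
  by case: n n_gt0 => // m _; rewrite factS expnS mulnA.
rewrite xi_termE eps0 expr0 mul1r.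
rewrite (no_one (fun a b => const_mx false a b)) => [|a b]; last by rewrite mxE.
rewrite (no_one (fun b a => const_mx false a b)) => [|a b]; last by rewrite mxE.
by rewrite fact_pow PoszM expr2.
Qed.

Lemma sum_xi_term_small : \sum_(M : 'M[bool]_n | (eps M < 2)%N) xi_term M = 0.
Proof.
(* With X = (n-1)! n!^(n-1), the zero matrix contributes (n X)^2 and each of
   the n^2 matrices with a single 1 contributes -X^2. *)
rewrite (bigID (fun M => eps M == 0)%N) /=.
rewrite (eq_bigl (fun M => M == const_mx false)) => [|M]; last first.
  by rewrite -eps_eq0; case: (eps M) => [|[|]].
rewrite [X in _ + X](eq_bigl (fun M => M \in mx_delta @: setT)) => [|M]; last first.
  by rewrite -eps_eq1; case: (eps M) => [|[|]].
rewrite big_pred1_eq big_imset /= => [|p q _ _]; last exact: mx_delta_inj.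
rewrite (eq_bigr _ (fun p _ => xi_term_delta p)) sumr_const cardsT card_prod card_ord.
rewrite xi_term_zero PoszM exprMn mulNrn -mulr_natl natrM natz -expr2.
exact: subrr.
Qed.

End SmallSupport.

Theorem mainTheorem5 (n : nat) (A : 'M[bool]_(n * n)) :
  (2 <= n)%N -> is_Sperm A ->
  (#|[set B : 'M[bool]_(n * n) | is_Sperm B && mx_disjoint A B]|%:Z : int) =
  \sum_(C in Bbar_classes n | (2 <= eps (crep C))%N)
     (-1) ^+ eps (crep C) * (#|C|)%:Z *
     (\prod_(0 <= i < n.-1) ((n - i)`! ^ psi_ i (crep C))%N)%:Z.
Proof.
move=> n_ge2 /Sperm_sperm_mx[c ->]; have n_gt0 : (0 < n)%N by apply: ltnW.
transitivity (\sum_(M : 'M[bool]_n) xi_term M).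
  rewrite card_Sperm_disjoint inclusion_exclusion (reindex _ (onW_bij _ (@mx_supp_bij n))).
  by apply: eq_bigr => M _; rewrite card_agree_on_supp (xi_termE n_gt0).
rewrite (bigID (fun M => 2 <= eps M)%N) /=.
rewrite [X in _ + X](eq_bigl (fun M => eps M < 2)%N) => [|M]; last by rewrite -ltnNge.
rewrite sum_xi_term_small // addr0 -sum_rowclasses => [|s M|s M]; last 2 first.
- by rewrite eps_row_perm.
- exact: xi_term_row_perm.
by apply: eq_bigr => C _; rewrite /xi_term mulrCA mulrA.
Qed.
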